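(* Let $d\in\mathbb N$ and $\varepsilon\in(0,1)$, let $h=h(d,\varepsilon)$ be the height and $\mathcal P^d_\varepsilon$ the set of leaves of Thiémard's decomposition process (see context), and let $f:[0,1)\to[1,\infty)$ be $$f(x)=1+\sum_{k=1}^\infty\frac{(k-\frac1d)(k-1-\frac1d)\cdots(1-\frac1d)}{(k+1)!}\,x^k .$$ Then $$h\le\left\lceil\frac{d(\varepsilon^{-1}-1)}{f(\varepsilon)}\right\rceil\qquad\text{and in particular}\qquad h\le\left\lceil\frac{d(\varepsilon^{-1}-1)}{1+\frac{d-1}{2d}\varepsilon}\right\rceil .$$ Furthermore, if $d=2$, $$|\mathcal P^2_\varepsilon|\le 2\Big(\frac{\varepsilon^{-1}-1}{f(\varepsilon)}+\frac32\Big)\Big(\frac{\varepsilon^{-1}-1}{f(\varepsilon)}+1\Big),$$ and if $d\ge3$, $$|\mathcal P^d_\varepsilon|\le\frac{d^d}{d!}\Big(\frac{\varepsilon^{-1}-1}{f(\varepsilon)}+\frac12\Big(1+\frac3d\Big)\Big)^d .$$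
   Context: Fix $d\in\mathbb N$ and $\varepsilon\in(0,1]$. For $x,y\in[0,1]^d$ write $[x,y)=\prod_{i=1}^d[x_i,y_i)$ and define the weight $W([x,y))=\prod_{i=1}^d y_i-\prod_{i=1}^d x_i$. Thiémard's decomposition process generates boxes, each with a type in $\{1,\dots,d+1\}$. It starts with $I^d=[0,1)^d=[(0,\dots,0),(1,\dots,1))$, of type $1$. Whenever a generated box $P=[\alpha,\beta)$ has type $j\le d$ and $W(P)>\varepsilon$, it is decomposed (procedure DECOMPOSE$(P,j)$) as follows: put $$\delta^P=\left(\frac{\prod_{i=1}^d\beta_i-\varepsilon}{\prod_{i=1}^{j-1}\alpha_i\prod_{i=j}^d\beta_i}\right)^{1/(d-j+1)},\qquad \gamma^P_i=\alpha_i\ (i<j),\quad \gamma^P_i=\delta^P\beta_i\ (i\ge j).$$ The children of $P$ are the boxes $Q^P_k=[a^{(k)},b^{(k)})$ for $k=j,\dots,d$, where $a^{(k)}_i=\gamma^P_i$ for $i<k$, $a^{(k)}_i=\alpha_i$ for $i\ge k$, $b^{(k)}_k=\gamma^P_k$, $b^{(k)}_i=\beta_i$ for $i\neq k$; the box $Q^P_k$ has type $k$. In addition $P$ has the child $Q^P_{d+1}=[\gamma^P,\beta)$ of type $d+1$. A generated box of type $d+1$ or of weight at most $\varepsilon$ is not decomposed. (Known facts from Thiémard: $\delta^P\in(0,1)$; the process terminates after finitely many steps; $W(Q^P_{d+1})=\varepsilon$ and $W(Q^P_k)=\delta^PW(P)$ for $j\le k\le d$.) $\mathcal P^d_\varepsilon$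 denotes the set of all generated boxes that are not decomposed (the leaves of the process). Indexing: for $r\in\mathbb N$ let $S^r=\{\boldsymbol i\in\mathbb N^r: 1\le i_1\le\dots\le i_r\le d\}$, $S^0=\{0\}$. Put $Q^{(0)}_0=I^d$, $Q^{(1)}_{j_1}=Q^{I^d}_{j_1}$ ($j_1=1,\dots,d$, defined when $W(I^d)>\varepsilon$), and for $\boldsymbol j\in S^r$ with $Q^{(r)}_{\boldsymbol j}$ generated and $W(Q^{(r)}_{\boldsymbol j})>\varepsilon$, $Q^{(r+1)}_{(\boldsymbol j,j_{r+1})}=Q^{Q^{(r)}_{\boldsymbol j}}_{j_{r+1}}$ for $j_{r+1}=j_r,\dots,d$. The height $h=h(d,\varepsilon)$ of the partition is $0$ if $W(I^d)\le\varepsilon$, and otherwise the largest $h\in\mathbb N$ such that there is $\boldsymbol j\in S^{h-1}$ with $Q^{(h-1)}_{\boldsymbol j}$ generated and $W(Q^{(h-1)}_{\boldsymbol j})>\varepsilon$. *)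

From Stdlib Require Import Reals Lra Lia List ZArith.
From Coquelicot Require Import Coquelicot.
Open Scope R_scope.

(* Points of [0,1]^d are functions nat -> R; only coordinates 1..d matter. *)
Definition box : Type := ((nat -> R) * (nat -> R))%type.

(* prod_range x a b = prod_{i=a}^{b} x i  (empty product = 1 if b < a) *)
Definition prod_range (x : nat -> R) (a b : nat) : R :=
  fold_right Rmult 1 (map x (seq a (S b - a))).

Definition weight (d : nat) (P : box) : R :=
  prod_range (snd P) 1 d - prod_range (fst P) 1 d.

Definition delta (d : nat) (eps : R) (P : box) (j : nat) : R :=
  Rpower ((prod_range (snd P) 1 d - eps) /
          (prod_range (fst P) 1 (j - 1) * prod_range (snd P) j d))
         (/ INR (d - j + 1)).

Definition gamma (d : nat) (eps : R) (P : box) (j : nat) : nat -> R :=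
  fun i => if (i <? j)%nat then fst P i else delta d eps P j * snd P i.

Definition child (d : nat) (eps : R) (P : box) (j k : nat) : box :=
  if (k =? d + 1)%nat then (gamma d eps P j, snd P)
  else ((fun i => if (i <? k)%nat then gamma d eps P j i else fst P i),
        (fun i => if (i =? k)%nat then gamma d eps P j k else snd P i)).

Definition unit_cube : box := (fun _ => 0, fun _ => 1).

(* generated d eps r P j : P is a box generated at depth r of the
   decomposition tree, with type j. *)
Inductive generated (d : nat) (eps : R) : nat -> box -> nat -> Prop :=
| gen_root : generated d eps 0 unit_cube 1
| gen_child : forall r P j k,
    generated d eps r P j -> (j <= d)%nat -> eps < weight d P ->
    (j <= k <= d + 1)%nat ->
    generated d eps (S r) (child d eps P j k) k.

Definition decomposed_at_depth (d : nat) (eps : R) (r : nat) : Prop :=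
  exists P j, generated d eps r P j /\ (j <= d)%nat /\ eps < weight d P.

(* h(d,eps) <= n : h is 0 if no box is decomposed, and otherwise the largest
   h with a decomposed box Q^{(h-1)}_j; so h <= n iff every depth r at which
   some box is decomposed satisfies r+1 <= n. *)
Definition height_le (d : nat) (eps : R) (n : Z) : Prop :=
  forall r, decomposed_at_depth d eps r -> (Z.of_nat (S r) <= n)%Z.

Definition leaf (d : nat) (eps : R) (P : box) : Prop :=
  exists r j, generated d eps r P j /\ (j = (d + 1)%nat \/ weight d P <= eps).

Definition box_eq (d : nat) (P Q : box) : Prop :=
  forall i, (1 <= i <= d)%nat -> fst P i = fst Q i /\ snd P i = snd Q i.

Definition leaves_card_le (d : nat) (eps : R) (c : R) : Prop :=
  forall s : list box,
    ForallOrdPairs (fun P Q => ~ box_eq d P Q) s ->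
    List.Forall (leaf d eps) s ->
    INR (length s) <= c.

Definition fcoef (d : nat) (k : nat) : R :=
  fold_right Rmult 1 (map (fun m => INR m - / INR d) (seq 1 k)) / INR (fact (S k)).

Definition fser (d : nat) (x : R) : R :=
  1 + Series (fun n => fcoef d (S n) * x ^ (S n)).

Definition ceilZ (x : R) : Z := (- Int_part (- x))%Z.

From Stdlib Require Import Reals Lra Lia ZArith List Sorting.
From Coquelicot Require Import Coquelicot.
Open Scope R_scope.

(* Each decomposition step multiplies B = prod beta of the decomposed box by
   delta^P, and along the process a box of type j satisfies
   B^(d-j+1) (B - eps)^(j-1) <= D^d, D the denominator of delta^P. This forces
   delta^P B <= B - (1 - s) with s = (1-eps)^(1/d), so a box decomposed at depth r
   has eps < 1 - r (1 - s); the binomial series gives 1 - s >= eps f(eps) / d,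
   which bounds the height. A leaf is determined by the nonincreasing sequence of
   types along its path, of length at most h and with entries in 1..d, so there
   are at most C(h + d, d) leaves, and AM-GM turns this into the stated bounds. *)

Lemma le_of_derive_nonneg (f df : R -> R) (x : R) :
  0 <= x ->
  (forall y, 0 <= y <= x -> is_derive f y (df y)) ->
  (forall y, 0 <= y <= x -> 0 <= df y) -> f 0 <= f x.
Proof.
  intros Hx Hd Hs.
  destruct (Req_dec x 0) as [->|Hx0]; [lra|].
  destruct (MVT_gen f 0 x df) as [c [Hc Heq]]; unfold Rmin, Rmax in *;
    destruct (Rle_dec 0 x); try lra.
  - intros y Hy. apply Hd. lra.
  - intros y Hy. apply derivable_continuous_pt. exists (df y).
    apply is_derive_Reals, Hd. lra.
  - assert (0 <= df c) by (apply Hs; lra). nra.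
Qed.

Definition pow1m (s x : R) : R := Rpower (1 - x) s.

Fixpoint pow1m_coef (s : R) (n : nat) : R :=
  match n with
  | O => 1
  | S n' => pow1m_coef s n' * (INR n' - s) / INR (S n')
  end.

Fixpoint pow1m_taylor (s : R) (N : nat) (x : R) : R :=
  match N with
  | O => 1
  | S N' => pow1m_taylor s N' x + pow1m_coef s (S N') * x ^ S N'
  end.

Lemma pow1m_coef_S_mul s n :
  pow1m_coef s (S n) * INR (S n) = - s * pow1m_coef (s - 1) n.
Proof.
  revert s; induction n as [|n IHn]; intros s.
  - simpl. field.
  - change (pow1m_coef s (S (S n)))
      with (pow1m_coef s (S n) * (INR (S n) - s) / INR (S (S n))).
    change (pow1m_coef (s - 1) (S n))
      with (pow1m_coef (s - 1) n * (INR n - (s - 1)) / INR (S n)).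
    assert (HSn : INR (S n) <> 0) by (apply not_0_INR; lia).
    assert (E : pow1m_coef s (S n) = - s * pow1m_coef (s - 1) n / INR (S n)).
    { rewrite <- IHn. field. exact HSn. }
    rewrite E, (S_INR (S n)), (S_INR n). rewrite S_INR in *.
    field. pose proof (pos_INR n). split; lra.
Qed.

Lemma is_derive_monomial c n x :
  is_derive (fun y => c * y ^ S n) x (c * (INR (S n) * x ^ n)).
Proof. auto_derive; [easy|]. destruct n; simpl; ring. Qed.

Lemma pow1m_taylor_derive s N x :
  is_derive (pow1m_taylor s (S N)) x (- s * pow1m_taylor (s - 1) N x).
Proof.
  revert s. induction N as [|N IHN]; intros s.
  - apply (is_derive_ext (fun y => 1 + pow1m_coef s 1 * y)).
    { intros y. simpl. ring. }
    auto_derive; [easy|]. simpl. field.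
  - change (pow1m_taylor s (S (S N)))
      with (fun y => pow1m_taylor s (S N) y + pow1m_coef s (S (S N)) * y ^ S (S N)).
    replace (- s * pow1m_taylor (s - 1) (S N) x)
      with (- s * pow1m_taylor (s - 1) N x
            + pow1m_coef s (S (S N)) * (INR (S (S N)) * x ^ S N)).
    + apply (is_derive_plus (pow1m_taylor s (S N))); [apply IHN|apply is_derive_monomial].
    + change (pow1m_taylor (s - 1) (S N) x)
        with (pow1m_taylor (s - 1) N x + pow1m_coef (s - 1) (S N) * x ^ S N).
      pose proof (pow1m_coef_S_mul s (S N)) as E.
      replace (pow1m_coef s (S (S N)) * (INR (S (S N)) * x ^ S N))
        with (pow1m_coef s (S (S N)) * INR (S (S N)) * x ^ S N) by ring.
      rewrite E. ring.
Qed.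

Lemma pow1m_derive s x : x < 1 -> is_derive (pow1m s) x (- s * pow1m (s - 1) x).
Proof.
  intros Hx. unfold pow1m, Rpower. auto_derive; [lra|].
  replace (1 + - x) with (1 - x) by ring.
  replace ((s - 1) * ln (1 - x)) with (s * ln (1 - x) + - ln (1 - x)) by ring.
  rewrite exp_plus, exp_Ropp, exp_ln by lra. field. lra.
Qed.

Lemma pow1m_taylor_at_0 s N : pow1m_taylor s N 0 = 1.
Proof. induction N as [|N IHN]; simpl; [easy|]. rewrite IHN. ring. Qed.

Lemma pow1m_at_0 s : pow1m s 0 = 1.
Proof. unfold pow1m, Rpower. rewrite Rminus_0_r, ln_1, Rmult_0_r. apply exp_0. Qed.

Lemma ln_1m_nonpos x : 0 <= x < 1 -> ln (1 - x) <= 0.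
Proof.
  intros Hx. rewrite <- ln_1. destruct (Req_dec x 0) as [->|].
  - right. f_equal. ring.
  - left. apply ln_increasing; lra.
Qed.

(* Differentiation maps degree N+1 at exponent s to degree N at exponent s-1,
   both for (1-x)^s and for its Taylor polynomials, so a comparison at degree N
   propagates to degree N+1; nonpositive exponents stay nonpositive. *)
Lemma pow1m_taylor_le N : forall s x, s <= 0 -> 0 <= x < 1 ->
  pow1m_taylor s N x <= pow1m s x.
Proof.
  induction N as [|N IHN]; intros s x Hs Hx.
  - unfold pow1m, Rpower. simpl. pose proof (ln_1m_nonpos x Hx).
    pose proof (exp_ineq1_le (s * ln (1 - x))). nra.
  - enough (1 - 1 <= pow1m s x - pow1m_taylor s (S N) x) by lra.
    rewrite <- (pow1m_at_0 s) at 1. rewrite <- (pow1m_taylor_at_0 s (S N)).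
    apply (le_of_derive_nonneg (fun y => pow1m s y - pow1m_taylor s (S N) y)
             (fun y => - s * pow1m (s - 1) y - - s * pow1m_taylor (s - 1) N y));
      [lra| |].
    + intros y Hy. apply (is_derive_minus (pow1m s) (pow1m_taylor s (S N))).
      * apply pow1m_derive. lra.
      * apply pow1m_taylor_derive.
    + intros y Hy. assert (pow1m_taylor (s - 1) N y <= pow1m (s - 1) y)
        by (apply IHN; lra). nra.
Qed.

Lemma pow1m_le_taylor N s x : 0 <= s <= 1 -> 0 <= x < 1 ->
  pow1m s x <= pow1m_taylor s N x.
Proof.
  intros Hs Hx. destruct N as [|N].
  - unfold pow1m, Rpower. simpl. pose proof (ln_1m_nonpos x Hx).
    enough (exp (s * ln (1 - x)) <= exp 0) by (rewrite exp_0 in *; lra).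
    destruct (Req_dec (s * ln (1 - x)) 0) as [->|]; [lra|].
    left. apply exp_increasing. nra.
  - enough (1 - 1 <= pow1m_taylor s (S N) x - pow1m s x) by lra.
    rewrite <- (pow1m_at_0 s) at 2. rewrite <- (pow1m_taylor_at_0 s (S N)) at 1.
    apply (le_of_derive_nonneg (fun y => pow1m_taylor s (S N) y - pow1m s y)
             (fun y => - s * pow1m_taylor (s - 1) N y - - s * pow1m (s - 1) y));
      [lra| |].
    + intros y Hy. apply (is_derive_minus (pow1m_taylor s (S N)) (pow1m s)).
      * apply pow1m_taylor_derive.
      * apply pow1m_derive. lra.
    + intros y Hy. assert (pow1m_taylor (s - 1) N y <= pow1m (s - 1) y)
        by (apply pow1m_taylor_le; lra). nra.
Qed.

Lemma fold_right_Rmult_app_single l a :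
  fold_right Rmult 1 (l ++ a :: nil) = fold_right Rmult 1 l * a.
Proof. induction l as [|b l IHl]; simpl; [ring|]. rewrite IHl. ring. Qed.

Lemma fcoef_0 d : fcoef d 0 = 1.
Proof. unfold fcoef. simpl. field. Qed.

Lemma fcoef_S d k :
  fcoef d (S k) = fcoef d k * (INR (S k) - / INR d) / INR (S (S k)).
Proof.
  unfold fcoef. rewrite seq_S, map_app. cbn [map].
  rewrite fold_right_Rmult_app_single.
  replace (1 + k)%nat with (S k) by lia.
  change (fact (S (S k))) with (S (S k) * fact (S k))%nat. rewrite mult_INR.
  assert (Hf : INR (fact (S k)) <> 0) by apply INR_fact_neq_0.
  assert (HSS : INR (S (S k)) <> 0) by (apply not_0_INR; lia).
  generalize (/ INR d). intros t. field. split; [exact Hf|exact HSS].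
Qed.

Lemma pow1m_coef_inv d k : pow1m_coef (/ INR d) (S k) = - / INR d * fcoef d k.
Proof.
  induction k as [|k IHk].
  - simpl. rewrite fcoef_0. generalize (/ INR d). intros t. field.
  - change (pow1m_coef (/ INR d) (S (S k)))
      with (pow1m_coef (/ INR d) (S k) * (INR (S k) - / INR d) / INR (S (S k))).
    rewrite IHk, fcoef_S. generalize (/ INR d). intros t. field.
    apply not_0_INR. lia.
Qed.

Lemma inv_INR_range d : (1 <= d)%nat -> 0 < / INR d <= 1.
Proof.
  intros Hd. assert (1 <= INR d) by (apply (le_INR 1); exact Hd).
  split; [apply Rinv_0_lt_compat; lra|].
  rewrite <- Rinv_1. apply Rinv_le_contravar; lra.
Qed.

Lemma fcoef_range d k : (1 <= d)%nat -> 0 <= fcoef d k <= 1.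
Proof.
  intros Hd. pose proof (inv_INR_range d Hd) as Hinv.
  induction k as [|k IHk]; [rewrite fcoef_0; lra|].
  rewrite fcoef_S, !S_INR. pose proof (pos_INR k).
  assert (0 <= (INR k + 1 - / INR d) / (INR k + 1 + 1) <= 1).
  { split; [apply Rdiv_le_0_compat; lra|].
    apply Rmult_le_reg_r with (INR k + 1 + 1); [lra|].
    unfold Rdiv. rewrite Rmult_assoc, Rinv_l by lra. lra. }
  unfold Rdiv in *. rewrite Rmult_assoc. nra.
Qed.

Definition fser_term (d : nat) (x : R) (n : nat) : R := fcoef d (S n) * x ^ S n.

Lemma one_sub_pow1m_taylor d x N :
  1 - pow1m_taylor (/ INR d) (S (S N)) x = / INR d * x * (1 + sum_n (fser_term d x) N).
Proof.
  induction N as [|N IHN].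
  - rewrite sum_O. unfold fser_term.
    change (pow1m_taylor (/ INR d) 2 x)
      with (1 + pow1m_coef (/ INR d) 1 * x ^ 1 + pow1m_coef (/ INR d) 2 * x ^ 2).
    rewrite !pow1m_coef_inv, fcoef_0. simpl. ring.
  - rewrite sum_Sn.
    change (plus (sum_n (fser_term d x) N) (fser_term d x (S N)))
      with (sum_n (fser_term d x) N + fser_term d x (S N)).
    change (pow1m_taylor (/ INR d) (S (S (S N))) x)
      with (pow1m_taylor (/ INR d) (S (S N)) x
            + pow1m_coef (/ INR d) (S (S (S N))) * x ^ S (S (S N))).
    rewrite pow1m_coef_inv. unfold fser_term at 2.
    replace (x ^ S (S (S N))) with (x * x ^ S (S N)) by (simpl; ring).
    enough (1 - pow1m_taylor (/ INR d) (S (S N)) x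
            = / INR d * x * (1 + sum_n (fser_term d x) N)) by lra.
    exact IHN.
Qed.

Lemma ex_series_fser_term d x : (1 <= d)%nat -> 0 <= x < 1 -> ex_series (fser_term d x).
Proof.
  intros Hd Hx.
  apply (@ex_series_le R_AbsRing R_CompleteNormedModule _ (fun n => x ^ n)).
  - intros n. change norm with Rabs. unfold fser_term. simpl.
    pose proof (fcoef_range d (S n) Hd). pose proof (pow_le x n (proj1 Hx)).
    assert (0 <= x * x ^ n <= x ^ n) by (split; nra).
    rewrite Rabs_right by (apply Rle_ge, Rmult_le_pos; lra). nra.
  - apply ex_series_geom. rewrite Rabs_right; lra.
Qed.

Lemma Series_le_const a M : ex_series a -> (forall N, sum_n a N <= M) -> Series a <= M.
Proof.
  intros Ha HN.
  apply (is_lim_seq_le (sum_n a) (fun _ => M) (Series a) M HN);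
    [apply Series_correct, Ha | apply is_lim_seq_const].
Qed.

Lemma const_le_Series a M : ex_series a -> (forall N, M <= sum_n a N) -> M <= Series a.
Proof.
  intros Ha HN.
  apply (is_lim_seq_le (fun _ => M) (sum_n a) M (Series a) HN);
    [apply is_lim_seq_const | apply Series_correct, Ha].
Qed.

(* This is where f enters: 1 - (1-eps)^(1/d) = (eps/d) f(eps) by the binomial
   series, of which only the easy inequality is needed. *)
Lemma fser_le_root_gap d eps : (1 <= d)%nat -> 0 < eps < 1 ->
  / INR d * eps * fser d eps <= 1 - Rpower (1 - eps) (/ INR d).
Proof.
  intros Hd He. pose proof (inv_INR_range d Hd) as Hinv.
  assert (Hd0 : INR d <> 0) by (apply not_0_INR; lia).
  assert (Hc : 0 < / INR d * eps) by nra.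
  set (K := 1 - Rpower (1 - eps) (/ INR d)).
  assert (HS : Series (fser_term d eps) <= K / (/ INR d * eps) - 1).
  { apply Series_le_const; [apply ex_series_fser_term; [exact Hd|lra]|].
    intros N. pose proof (pow1m_le_taylor (S (S N)) (/ INR d) eps ltac:(lra) ltac:(lra)).
    pose proof (one_sub_pow1m_taylor d eps N).
    apply Rmult_le_reg_r with (/ INR d * eps); [exact Hc|].
    unfold pow1m in *.
    replace ((K / (/ INR d * eps) - 1) * (/ INR d * eps)) with (K - / INR d * eps)
      by (field; split; [exact Hd0|lra]).
    rewrite Rmult_plus_distr_l, Rmult_1_r, (Rmult_comm _ (sum_n _ _)) in H0.
    set (S := sum_n (fser_term d eps) N) in H0.
    change (sum_n (fser_term d eps) N) with S. unfold K. lra. }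
  unfold fser. change (fun n => fcoef d (S n) * eps ^ S n) with (fser_term d eps).
  replace K with (/ INR d * eps * (K / (/ INR d * eps)))
    by (field; split; [exact Hd0|lra]).
  apply Rmult_le_compat_l; lra.
Qed.

Lemma fser_ge_linear d eps : (1 <= d)%nat -> 0 < eps < 1 ->
  1 + (INR d - 1) / (2 * INR d) * eps <= fser d eps.
Proof.
  intros Hd He. assert (1 <= INR d) by (apply (le_INR 1); exact Hd).
  unfold fser. apply Rplus_le_compat_l.
  change (fun n => fcoef d (S n) * eps ^ S n) with (fser_term d eps).
  replace ((INR d - 1) / (2 * INR d) * eps) with (fser_term d eps 0).
  2:{ unfold fser_term. rewrite fcoef_S, fcoef_0. simpl. field. lra. }
  apply const_le_Series; [apply ex_series_fser_term; [exact Hd|lra]|].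
  induction N as [|N IHN]; [rewrite sum_O; lra|].
  rewrite sum_Sn. change (plus (sum_n (fser_term d eps) N) (fser_term d eps (S N)))
    with (sum_n (fser_term d eps) N + fser_term d eps (S N)).
  assert (0 <= fser_term d eps (S N)).
  { apply Rmult_le_pos; [apply fcoef_range, Hd | apply pow_le; lra]. }
  rewrite <- (Rplus_0_r (fser_term d eps 0)). apply Rplus_le_compat; [exact IHN|exact H0].
Qed.

Lemma fser_ge_1 d eps : (1 <= d)%nat -> 0 < eps < 1 -> 1 <= fser d eps.
Proof.
  intros Hd He. pose proof (fser_ge_linear d eps Hd He).
  assert (1 <= INR d) by (apply (le_INR 1); exact Hd).
  assert (0 <= (INR d - 1) / (2 * INR d) * eps)
    by (apply Rmult_le_pos; [apply Rdiv_le_0_compat|]; lra).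
  lra.
Qed.

Lemma pow_lt_compat_l a b n : 0 <= a < b -> (1 <= n)%nat -> a ^ n < b ^ n.
Proof.
  intros Hab Hn. induction n as [|n IHn]; [lia|].
  destruct n as [|n]; [simpl; lra|].
  assert (a ^ S n < b ^ S n) by (apply IHn; lia).
  assert (0 <= a ^ S n) by (apply pow_le; lra).
  simpl in *. nra.
Qed.

Lemma pow_le_reg_l a b n : 0 <= a -> 0 <= b -> (1 <= n)%nat -> a ^ n <= b ^ n -> a <= b.
Proof.
  intros Ha Hb Hn H. destruct (Rle_lt_dec a b) as [|Hba]; [assumption|].
  assert (b ^ n < a ^ n) by (apply pow_lt_compat_l; lra || assumption). lra.
Qed.

Lemma pow_le_self s n : 0 <= s <= 1 -> (1 <= n)%nat -> s ^ n <= s.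
Proof.
  intros Hs Hn. induction n as [|n IHn]; [lia|]. destruct n as [|n]; [simpl; lra|].
  assert (s ^ S n <= s) by (apply IHn; lia).
  assert (0 <= s ^ S n) by (apply pow_le; lra).
  change (s ^ S (S n)) with (s * s ^ S n). nra.
Qed.

Lemma pow_le_1_reg s n : 0 <= s -> (1 <= n)%nat -> s ^ n <= 1 -> s <= 1.
Proof.
  intros Hs Hn H. apply (pow_le_reg_l s 1 n); [lra|lra|exact Hn|]. rewrite pow1. exact H.
Qed.

(* (1 - z^n) / (1 - z) is nondecreasing in z on [0, 1], written without division. *)
Lemma one_sub_pow_ratio_le z s n : 0 <= z <= s -> s <= 1 ->
  (1 - z ^ n) * (1 - s) <= (1 - s ^ n) * (1 - z).
Proof.
  intros Hz Hs. induction n as [|n IHn]; [simpl; lra|].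
  assert (z ^ n <= s ^ n) by (apply pow_incr; lra).
  assert (0 <= z ^ n) by (apply pow_le; lra).
  assert (0 <= (1 - z) * (1 - s)) by (apply Rmult_le_pos; lra).
  simpl.
  replace ((1 - z * z ^ n) * (1 - s))
    with ((1 - z ^ n) * (1 - s) + z ^ n * ((1 - z) * (1 - s))) by ring.
  replace ((1 - s * s ^ n) * (1 - z))
    with ((1 - s ^ n) * (1 - z) + s ^ n * ((1 - z) * (1 - s))) by ring.
  nra.
Qed.

Lemma Rpower_pos x y : 0 < Rpower x y.
Proof. apply exp_pos. Qed.

Lemma Rpower_inv_pow x n : 0 < x -> (1 <= n)%nat -> Rpower x (/ INR n) ^ n = x.
Proof.
  intros Hx Hn. rewrite <- Rpower_pow by apply Rpower_pos.
  rewrite Rpower_mult, Rinv_l by (apply not_0_INR; lia). apply Rpower_1, Hx.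
Qed.

Lemma ceilZ_ge_S X r : INR r < X -> (Z.of_nat (S r) <= ceilZ X)%Z.
Proof.
  intros H. unfold ceilZ, Int_part. destruct (archimed (- X)) as [H1 H2].
  assert (IZR (up (- X)) < IZR (1 - Z.of_nat r)).
  { rewrite minus_IZR, <- INR_IZR_INZ. simpl. lra. }
  apply lt_IZR in H0. lia.
Qed.

Lemma ceilZ_lt X : IZR (ceilZ X) < X + 1.
Proof.
  unfold ceilZ, Int_part. destruct (archimed (- X)) as [H1 H2].
  rewrite opp_IZR, minus_IZR. simpl. lra.
Qed.

Lemma ceilZ_nonneg X : 0 <= X -> (0 <= ceilZ X)%Z.
Proof.
  intros HX. unfold ceilZ, Int_part. destruct (archimed (- X)) as [H1 H2].
  assert (IZR (up (- X)) < IZR 2) by (simpl; lra). apply lt_IZR in H. lia.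
Qed.

Lemma height_le_ceilZ d eps X :
  (forall r, decomposed_at_depth d eps r -> INR r < X) -> height_le d eps (ceilZ X).
Proof. intros H r Hr. apply ceilZ_ge_S, H, Hr. Qed.

(* Raising to the m-th power: delta^(dm) D^d = (B - eps)^d, while the hypothesis
   bounds D^d from below. *)
Lemma delta_pow_le B eps D delta d m j1 :
  0 < eps < B -> 0 < D -> 0 < delta -> (1 <= m)%nat -> d = (m + j1)%nat ->
  delta ^ m * D = B - eps -> B ^ m * (B - eps) ^ j1 <= D ^ d ->
  delta ^ d * B <= B - eps.
Proof.
  intros He HD Hdl Hm Hd Heq Hinv.
  assert (E1 : (delta ^ d) ^ m * D ^ d = (B - eps) ^ m * (B - eps) ^ j1).
  { rewrite <- pow_mult, Nat.mul_comm, pow_mult, <- Rpow_mult_distr, Heq, Hd, pow_add.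
    reflexivity. }
  assert (E2 : ((B - eps) / B) ^ m * B ^ m = (B - eps) ^ m).
  { rewrite <- Rpow_mult_distr. f_equal. field. lra. }
  assert (HDd : 0 < D ^ d) by (apply pow_lt; exact HD).
  assert (Hv : 0 <= ((B - eps) / B) ^ m) by (apply pow_le, Rdiv_le_0_compat; lra).
  assert (H1 : (delta ^ d) ^ m <= ((B - eps) / B) ^ m).
  { apply Rmult_le_reg_r with (D ^ d); [exact HDd|]. rewrite E1.
    apply Rle_trans with (((B - eps) / B) ^ m * (B ^ m * (B - eps) ^ j1)).
    - rewrite <- Rmult_assoc, E2. lra.
    - apply Rmult_le_compat_l; assumption. }
  apply pow_le_reg_l in H1;
    [| apply pow_le; lra | apply Rdiv_le_0_compat; lra | exact Hm].
  apply Rmult_le_reg_r with (/ B); [apply Rinv_0_lt_compat; lra|].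
  rewrite Rmult_assoc, Rinv_r by lra. unfold Rdiv in H1. lra.
Qed.

(* The invariant of a box with data (B, D) passed to its child of type k, whose
   data is (delta B, delta^(a+1) D) with a = k - j, p = d - k + 1, k1 = k - 1. *)
Lemma child_invariant_ineq B eps D delta d m a p k1 :
  0 < eps < B -> 0 < D -> 0 < delta -> (1 <= p)%nat ->
  m = (a + p)%nat -> d = (p + k1)%nat ->
  delta ^ m * D = B - eps -> delta ^ d * B <= B - eps -> eps < delta * B ->
  (delta * B) ^ p * (delta * B - eps) ^ k1 <= (delta ^ (a + 1) * D) ^ d.
Proof.
  intros He HD Hdl Hp Hm Hd Heq Hdd Hc.
  destruct p as [|p0]; [lia|].
  assert (Hdl1 : delta <= 1).
  { apply (pow_le_1_reg delta d); [lra|lia|].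
    apply Rmult_le_reg_r with B; [lra|]. lra. }
  assert (Hpos : 0 < delta ^ (d * p0)) by (apply pow_lt; exact Hdl).
  apply Rmult_le_reg_r with (delta ^ (d * p0)); [exact Hpos|].
  assert (EY : (delta ^ (a + 1) * D) ^ d * delta ^ (d * p0) = (B - eps) ^ d).
  { rewrite <- Heq, !Rpow_mult_distr, <- !pow_mult.
    replace (m * d)%nat with ((a + 1) * d + d * p0)%nat by (subst; lia).
    rewrite pow_add. ring. }
  assert (EX : (delta * B) ^ S p0 * (delta * (B - eps)) ^ k1 * delta ^ (d * p0) =
               (delta ^ d * B) ^ S p0 * (B - eps) ^ k1).
  { rewrite !Rpow_mult_distr, <- pow_mult.
    replace (d * S p0)%nat with (S p0 + k1 + d * p0)%nat by (subst; lia).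
    rewrite !pow_add. ring. }
  rewrite EY.
  apply Rle_trans with ((delta * B) ^ S p0 * (delta * (B - eps)) ^ k1 * delta ^ (d * p0)).
  { apply Rmult_le_compat_r; [lra|]. apply Rmult_le_compat_l; [apply pow_le; nra|].
    apply pow_incr. split; nra. }
  replace ((B - eps) ^ d) with ((B - eps) ^ S p0 * (B - eps) ^ k1)
    by (rewrite Hd, pow_add; reflexivity).
  rewrite EX.
  apply Rmult_le_compat_r; [apply pow_le; lra|].
  apply pow_incr. split; [|exact Hdd]. apply Rmult_le_pos; [apply pow_le|]; lra.
Qed.

(* With z = 1 - (1 - s)/B, monotonicity of (1 - z^d)/(1 - z) gives
   z^d B >= B - eps >= delta^d B, hence delta <= z. *)
Lemma delta_mul_le B eps delta d s :
  0 < eps < B -> B <= 1 -> 0 < delta -> (1 <= d)%nat -> delta ^ d * B <= B - eps ->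
  0 < s -> s ^ d = 1 - eps -> delta * B <= B - (1 - s).
Proof.
  intros He HB Hdl Hd Hdd Hs Hsd.
  assert (Hs1 : s < 1).
  { destruct (Rlt_le_dec s 1) as [|Hs1]; [assumption|].
    assert (1 <= s ^ d) by (rewrite <- (pow1 d); apply pow_incr; lra). lra. }
  assert (Hse : 1 - eps <= s) by (rewrite <- Hsd; apply pow_le_self; lra || exact Hd).
  assert (Hgap : 1 - s <= (1 - s) / B <= 1).
  { split; apply Rmult_le_reg_r with B; try lra;
      unfold Rdiv; rewrite Rmult_assoc, Rinv_l by lra; nra. }
  set (z := 1 - (1 - s) / B).
  assert (G : (1 - z ^ d) * (1 - s) <= (1 - s ^ d) * (1 - z))
    by (apply one_sub_pow_ratio_le; unfold z; lra).
  rewrite Hsd in G. replace (1 - z) with ((1 - s) / B) in G by (unfold z; ring).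
  assert (G2 : 1 - z ^ d <= eps / B).
  { apply Rmult_le_reg_r with (1 - s); [lra|].
    replace (eps / B * (1 - s)) with ((1 - (1 - eps)) * ((1 - s) / B)) by (field; lra).
    exact G. }
  assert (G3 : B - eps <= z ^ d * B).
  { apply Rmult_le_compat_r with (r := B) in G2; [|lra].
    replace (eps / B * B) with eps in G2 by (field; lra). lra. }
  assert (Hz : delta <= z).
  { apply (pow_le_reg_l delta z d); [lra|unfold z; lra|exact Hd|].
    apply Rmult_le_reg_r with B; lra. }
  replace (B - (1 - s)) with (z * B) by (unfold z; field; lra).
  apply Rmult_le_compat_r; lra.
Qed.

Definition prod_from (x : nat -> R) (a n : nat) : R := fold_right Rmult 1 (map x (seq a n)).

Lemma prod_range_from x a b : prod_range x a b = prod_from x a (S b - a).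
Proof. reflexivity. Qed.

Lemma prod_from_S x a n : prod_from x a (S n) = x a * prod_from x (S a) n.
Proof. reflexivity. Qed.

Lemma prod_from_ext x y a n :
  (forall i, (a <= i < a + n)%nat -> x i = y i) -> prod_from x a n = prod_from y a n.
Proof.
  revert a. induction n as [|n IHn]; intros a H; [reflexivity|].
  rewrite !prod_from_S, (H a) by lia. f_equal. apply IHn. intros; apply H; lia.
Qed.

Lemma prod_from_pos x a n :
  (forall i, (a <= i < a + n)%nat -> 0 < x i) -> 0 < prod_from x a n.
Proof.
  revert a. induction n as [|n IHn]; intros a H; [unfold prod_from; simpl; lra|].
  rewrite prod_from_S. apply Rmult_lt_0_compat; [apply H; lia|].
  apply IHn. intros; apply H; lia.
Qed.

Lemma prod_from_eq_0 x a n i : (a <= i < a + n)%nat -> x i = 0 -> prod_from x a n = 0.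
Proof.
  revert a. induction n as [|n IHn]; intros a H Hi; [lia|].
  rewrite prod_from_S. destruct (Nat.eq_dec i a) as [<-|].
  - rewrite Hi. ring.
  - rewrite (IHn (S a)) by (lia || exact Hi). ring.
Qed.

Lemma prod_from_add x a n m :
  prod_from x a (n + m) = prod_from x a n * prod_from x (a + n) m.
Proof.
  revert a. induction n as [|n IHn]; intros a.
  - rewrite Nat.add_0_r. unfold prod_from at 2. simpl. ring.
  - simpl (S n + m)%nat. rewrite !prod_from_S, IHn.
    replace (S a + n)%nat with (a + S n)%nat by lia. ring.
Qed.

Lemma prod_from_scale c x a n : prod_from (fun i => c * x i) a n = c ^ n * prod_from x a n.
Proof.
  revert a. induction n as [|n IHn]; intros a; [unfold prod_from; simpl; ring|].
  rewrite !prod_from_S, IHn. simpl. ring.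
Qed.

Lemma prod_from_scale_at c x a n k : (a <= k < a + n)%nat ->
  prod_from (fun i => if (i =? k)%nat then c * x k else x i) a n = c * prod_from x a n.
Proof.
  revert a. induction n as [|n IHn]; intros a H; [lia|].
  rewrite !prod_from_S. destruct (Nat.eqb_spec a k) as [<-|].
  - rewrite (prod_from_ext _ x); [ring|].
    intros i Hi. destruct (Nat.eqb_spec i a); [lia|reflexivity].
  - rewrite IHn by lia. ring.
Qed.

Lemma prod_from_1 a n : prod_from (fun _ => 1) a n = 1.
Proof.
  revert a. induction n as [|n IHn]; intros a; [reflexivity|].
  rewrite prod_from_S, IHn. ring.
Qed.

(* codes H n: every nonincreasing list with entries in [1, n] and length <= H. *)
Fixpoint codes (H n : nat) : list (list nat) :=
  match H with
  | O => nil :: nil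
  | S H' =>
      (fix codes_S (n : nat) : list (list nat) :=
         match n with
         | O => nil :: nil
         | S n' => codes_S n' ++ map (cons (S n')) (codes H' (S n'))
         end) n
  end.

Lemma codes_S_S H n : codes (S H) (S n) = codes (S H) n ++ map (cons (S n)) (codes H (S n)).
Proof. reflexivity. Qed.

Lemma nil_in_codes H n : In nil (codes H n).
Proof.
  destruct H as [|H]; [left; reflexivity|].
  induction n as [|n IHn]; [left; reflexivity|].
  rewrite codes_S_S. apply in_or_app. left. exact IHn.
Qed.

Lemma in_codes H n p : StronglySorted ge p -> (forall x, In x p -> (1 <= x <= n)%nat) ->
  (length p <= H)%nat -> In p (codes H n).
Proof.
  revert n p. induction H as [|H IHH]; intros n p Hs Hin Hl.
  - destruct p; [left; reflexivity|simpl in Hl; lia].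
  - induction n as [|n IHn].
    + destruct p as [|a p]; [left; reflexivity|].
      specialize (Hin a (or_introl eq_refl)). lia.
    + rewrite codes_S_S. apply in_or_app. destruct p as [|a p]; [left; apply nil_in_codes|].
      apply StronglySorted_inv in Hs as [Hs Ha]. rewrite Forall_forall in Ha.
      pose proof (Hin a (or_introl eq_refl)) as Ha1.
      destruct (Nat.eq_dec a (S n)) as [->|Hne].
      * right. apply in_map, IHH; [exact Hs| |simpl in Hl; lia].
        intros y Hy. specialize (Ha y Hy). specialize (Hin y (or_intror Hy)). lia.
      * left. apply IHn.
        intros y [<-|Hy]; [lia|]. specialize (Ha y Hy). specialize (Hin y (or_intror Hy)). lia.
Qed.

Fixpoint rising_prod (n : nat) (h : R) : R :=
  match n with O => 1 | S n' => rising_prod n' h * (h + INR (S n')) end.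

Lemma rising_prod_S n h : rising_prod (S n) h = (h + 1) * rising_prod n (h + 1).
Proof.
  induction n as [|n IHn]; [simpl; ring|].
  change (rising_prod (S (S n)) h) with (rising_prod (S n) h * (h + INR (S (S n)))).
  rewrite IHn. change (rising_prod (S n) (h + 1))
    with (rising_prod n (h + 1) * (h + 1 + INR (S n))).
  rewrite (S_INR (S n)). ring.
Qed.

Lemma rising_prod_0 n : rising_prod n 0 = INR (fact n).
Proof.
  induction n as [|n IHn]; [reflexivity|].
  change (rising_prod (S n) 0) with (rising_prod n 0 * (0 + INR (S n))).
  rewrite IHn. change (fact (S n)) with (S n * fact n)%nat. rewrite mult_INR. ring.
Qed.

(* Stars and bars: there are C(H + n, n) such codes. *)
Lemma length_codes H n : INR (length (codes H n)) * INR (fact n) = rising_prod n (INR H).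
Proof.
  revert n. induction H as [|H IHH]; intros n.
  - simpl length. rewrite rising_prod_0. simpl. ring.
  - induction n as [|n IHn]; [simpl; ring|].
    rewrite codes_S_S, length_app, length_map, plus_INR.
    change (fact (S n)) with (S n * fact n)%nat. rewrite mult_INR.
    change (rising_prod (S n) (INR (S H)))
      with (rising_prod n (INR (S H)) * (INR (S H) + INR (S n))).
    rewrite <- IHn.
    pose proof (IHH (S n)) as E. rewrite rising_prod_S, <- S_INR, <- IHn in E.
    change (fact (S n)) with (S n * fact n)%nat in E. rewrite mult_INR in E.
    lra.
Qed.

Lemma rising_prod_nonneg n h : 0 <= h -> 0 <= rising_prod n h.
Proof.
  intros Hh. induction n as [|n IHn]; simpl; [lra|].
  apply Rmult_le_pos; [exact IHn|]. pose proof (pos_INR (S n)). simpl in *. lra.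
Qed.

(* AM-GM, pairing the outermost factors (h+1)(h+n) <= (h + (n+1)/2)^2 and recursing
   on the inner ones. *)
Lemma rising_prod_le_pow n h : 0 <= h -> rising_prod n h <= (h + (INR n + 1) / 2) ^ n.
Proof.
  revert h. induction n as [n IHn] using lt_wf_ind; intros h Hh.
  destruct n as [|[|n]]; [simpl; lra|simpl; lra|].
  rewrite rising_prod_S.
  change (rising_prod (S n) (h + 1)) with (rising_prod n (h + 1) * (h + 1 + INR (S n))).
  assert (A1 : rising_prod n (h + 1) <= (h + 1 + (INR n + 1) / 2) ^ n)
    by (apply IHn; lia || lra).
  assert (A0 : 0 <= rising_prod n (h + 1)) by (apply rising_prod_nonneg; lra).
  replace (h + (INR (S (S n)) + 1) / 2) with (h + 1 + (INR n + 1) / 2)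
    by (rewrite !S_INR; field).
  set (c := h + 1 + (INR n + 1) / 2) in *.
  pose proof (pos_INR n).
  assert (A2 : 0 <= (h + 1) * (h + 1 + INR (S n)) <= c * c).
  { unfold c. rewrite S_INR. split; nra. }
  assert (0 <= c ^ n) by (apply pow_le; unfold c; lra).
  replace ((h + 1) * (rising_prod n (h + 1) * (h + 1 + INR (S n))))
    with ((h + 1) * (h + 1 + INR (S n)) * rising_prod n (h + 1)) by ring.
  replace (c ^ S (S n)) with (c * c * c ^ n) by (simpl; ring).
  apply Rmult_le_compat; lra.
Qed.

Lemma rising_prod_le_scaled_pow n h q : (1 <= n)%nat -> 0 <= h < INR n * q + 1 ->
  rising_prod n h <= (INR n * (q + / 2 * (1 + 3 / INR n))) ^ n.
Proof.
  intros Hn Hh. assert (1 <= INR n) by (apply (le_INR 1); exact Hn).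
  apply Rle_trans with ((h + (INR n + 1) / 2) ^ n); [apply rising_prod_le_pow; lra|].
  apply pow_incr. split; [lra|].
  replace (INR n * (q + / 2 * (1 + 3 / INR n))) with (INR n * q + 1 + (INR n + 1) / 2)
    by (field; lra).
  lra.
Qed.

Section Decomposition.

Variables (d : nat) (eps : R).
Hypotheses (Hd : (1 <= d)%nat) (He : 0 < eps < 1).

Definition upper_vol (P : box) : R := prod_range (snd P) 1 d.

Definition delta_denom (P : box) (j : nat) : R :=
  prod_range (fst P) 1 (j - 1) * prod_range (snd P) j d.

Let s := Rpower (1 - eps) (/ INR d).

Lemma s_pos : 0 < s.
Proof. apply Rpower_pos. Qed.

Lemma s_pow : s ^ d = 1 - eps.
Proof. apply Rpower_inv_pow; [lra|exact Hd]. Qed.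

Lemma child_fst P j k i : (k <= d)%nat ->
  fst (child d eps P j k) i =
  if (i <? k)%nat then (if (i <? j)%nat then fst P i else delta d eps P j * snd P i)
  else fst P i.
Proof.
  intros Hk. unfold child. destruct (Nat.eqb_spec k (d + 1)); [lia|reflexivity].
Qed.

Lemma child_snd P j k i : (j <= k <= d)%nat ->
  snd (child d eps P j k) i = if (i =? k)%nat then delta d eps P j * snd P k else snd P i.
Proof.
  intros Hk. unfold child, gamma. destruct (Nat.eqb_spec k (d + 1)); [lia|].
  simpl. destruct (Nat.ltb_spec k j); [lia|reflexivity].
Qed.

Lemma child_upper_vol P j k : (1 <= j <= k)%nat -> (k <= d)%nat ->
  upper_vol (child d eps P j k) = delta d eps P j * upper_vol P.
Proof.
  intros Hj Hk. unfold upper_vol. rewrite !prod_range_from.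
  rewrite (prod_from_ext _ (fun i => if (i =? k)%nat then delta d eps P j * snd P k
                                     else snd P i)).
  - apply prod_from_scale_at. lia.
  - intros i Hi. apply child_snd. lia.
Qed.

Lemma child_delta_denom P j k : (1 <= j <= k)%nat -> (k <= d)%nat ->
  delta_denom (child d eps P j k) k = delta d eps P j ^ (k - j + 1) * delta_denom P j.
Proof.
  intros Hj Hk. unfold delta_denom. rewrite !prod_range_from.
  set (dl := delta d eps P j).
  replace (S (k - 1) - 1)%nat with ((j - 1) + (k - j))%nat by lia.
  rewrite prod_from_add. replace (1 + (j - 1))%nat with j by lia.
  rewrite (prod_from_ext (fst (child d eps P j k)) (fst P) 1 (j - 1)).
  2:{ intros i Hi. rewrite child_fst by lia.
      destruct (Nat.ltb_spec i k); [|lia]. destruct (Nat.ltb_spec i j); [reflexivity|lia]. }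
  rewrite (prod_from_ext (fst (child d eps P j k)) (fun i => dl * snd P i) j (k - j)).
  2:{ intros i Hi. rewrite child_fst by lia.
      destruct (Nat.ltb_spec i k); [|lia]. destruct (Nat.ltb_spec i j); [lia|reflexivity]. }
  rewrite prod_from_scale.
  rewrite (prod_from_ext (snd (child d eps P j k))
             (fun i => if (i =? k)%nat then dl * snd P k else snd P i)).
  2:{ intros i Hi. apply child_snd. lia. }
  rewrite prod_from_scale_at by lia.
  replace (S (j - 1) - 1)%nat with (j - 1)%nat by lia.
  replace (S d - j)%nat with ((k - j) + (S d - k))%nat by lia.
  rewrite (prod_from_add (snd P) j). replace (j + (k - j))%nat with k by lia.
  rewrite pow_add. simpl pow. ring.
Qed.

(* The last conjunct yields delta^d B <= B - eps (delta_pow_le), which is what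
   makes each level shrink B by at least 1 - s (delta_mul_le). *)
Definition invariant (r : nat) (P : box) (j : nat) : Prop :=
  (forall i, (j <= i)%nat -> fst P i = 0) /\
  (forall i, (1 <= i < j)%nat -> 0 < fst P i) /\
  (forall i, 0 < snd P i) /\
  upper_vol P <= 1 - INR r * (1 - s) /\
  (eps < upper_vol P ->
   upper_vol P ^ (d - j + 1) * (upper_vol P - eps) ^ (j - 1) <= delta_denom P j ^ d).

Lemma invariant_root : invariant 0 unit_cube 1.
Proof.
  unfold invariant, unit_cube, upper_vol, delta_denom. simpl fst; simpl snd.
  rewrite !prod_range_from, !prod_from_1.
  repeat split; intros; try lra; try lia.
  - simpl INR. lra.
  - replace (S (1 - 1) - 1)%nat with 0%nat by lia.
    unfold prod_from. simpl. rewrite !Rmult_1_r, !pow1. lra.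
Qed.

Lemma weight_eq_upper_vol P j : (1 <= j)%nat ->
  (forall i, (j <= i)%nat -> fst P i = 0) -> (j <= d)%nat -> weight d P = upper_vol P.
Proof.
  intros Hj Hf0 Hjd. unfold weight, upper_vol.
  rewrite (prod_range_from (fst P)), (prod_from_eq_0 _ 1 _ j); [ring|lia|apply Hf0; lia].
Qed.

Lemma invariant_child r P j k : invariant r P j -> (1 <= j <= d)%nat ->
  eps < weight d P -> (j <= k <= d)%nat -> invariant (S r) (child d eps P j k) k.
Proof.
  intros [Hf0 [Hfp [Hsp [HB HI]]]] Hj Hw Hk.
  rewrite (weight_eq_upper_vol P j) in Hw by (lia || exact Hf0).
  assert (HD : 0 < delta_denom P j).
  { unfold delta_denom. rewrite !prod_range_from.
    apply Rmult_lt_0_compat; apply prod_from_pos; intros i Hi; [apply Hfp; lia|apply Hsp]. }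
  set (dl := delta d eps P j).
  assert (Hdl : 0 < dl) by apply Rpower_pos.
  assert (Hdm : dl ^ (d - j + 1) * delta_denom P j = upper_vol P - eps).
  { unfold dl, delta. fold (upper_vol P). fold (delta_denom P j).
    rewrite Rpower_inv_pow by (lia || (apply Rdiv_lt_0_compat; lra)). field. lra. }
  assert (Hdd : dl ^ d * upper_vol P <= upper_vol P - eps)
    by (apply (delta_pow_le _ _ (delta_denom P j) _ d (d - j + 1) (j - 1));
        lra || lia || auto).
  assert (HB1 : upper_vol P <= 1).
  { pose proof s_pow. pose proof s_pos.
    assert (0 <= INR r * (1 - s)).
    { apply Rmult_le_pos; [apply pos_INR|]. enough (s <= 1) by lra.
      apply (pow_le_1_reg s d); lra || auto. }
    lra. }
  assert (Hdec : dl * upper_vol P <= upper_vol P - (1 - s))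
    by (apply (delta_mul_le _ eps _ d s); lra || auto using s_pos, s_pow).
  repeat split.
  - intros i Hi. rewrite child_fst by lia. destruct (Nat.ltb_spec i k); [lia|].
    apply Hf0. lia.
  - intros i Hi. rewrite child_fst by lia. destruct (Nat.ltb_spec i k); [|lia].
    destruct (Nat.ltb_spec i j); [apply Hfp; lia|]. apply Rmult_lt_0_compat; auto.
  - intros i. rewrite child_snd by lia.
    destruct (i =? k)%nat; [apply Rmult_lt_0_compat|]; auto.
  - rewrite child_upper_vol by lia. fold dl. rewrite S_INR. lra.
  - intros Hc. rewrite child_upper_vol in * by lia. rewrite child_delta_denom by lia.
    fold dl in Hc |- *.
    apply (child_invariant_ineq _ eps _ _ d (d - j + 1) (k - j) (d - k + 1) (k - 1));
      lra || lia || auto.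
Qed.

Lemma generated_invariant r P j : generated d eps r P j ->
  (1 <= j <= d + 1)%nat /\ ((j <= d)%nat -> invariant r P j).
Proof.
  induction 1 as [|r P j k Hg IH Hjd Hw Hk].
  - split; [lia|intros _; exact invariant_root].
  - destruct IH as [Hj IH]. split; [lia|].
    intros Hkd. apply (invariant_child r P j k); [apply IH| | |]; lia || assumption.
Qed.

Definition height_bound : R := INR d * (/ eps - 1) / fser d eps.

Lemma height_bound_pos : 0 < height_bound.
Proof.
  unfold height_bound. pose proof (fser_ge_1 d eps Hd He).
  assert (1 <= INR d) by (apply (le_INR 1); exact Hd).
  assert (1 < / eps) by (rewrite <- Rinv_1; apply Rinv_lt_contravar; lra).
  apply Rdiv_lt_0_compat; [apply Rmult_lt_0_compat|]; lra.
Qed.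

(* A box decomposed at depth r has eps < B <= 1 - r (1 - s), and
   1 - s >= eps f(eps) / d. *)
Lemma decomposed_depth_lt r : decomposed_at_depth d eps r -> INR r < height_bound.
Proof.
  intros [P [j [Hg [Hj Hw]]]].
  destruct (generated_invariant r P j Hg) as [Hj1 Hinv].
  pose proof (Hinv Hj) as Hinvj. destruct Hinvj as [Hf0 [_ [_ [HB _]]]].
  rewrite (weight_eq_upper_vol P j) in Hw by (lia || exact Hf0).
  pose proof (fser_le_root_gap d eps Hd He) as Hgap. fold s in Hgap.
  pose proof (fser_ge_1 d eps Hd He) as Hf1.
  pose proof (inv_INR_range d Hd) as Hinvd.
  set (c := / INR d * eps * fser d eps) in *.
  assert (Hc : 0 < c) by (unfold c; apply Rmult_lt_0_compat; [apply Rmult_lt_0_compat|]; lra).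
  assert (Hr : INR r * c < 1 - eps).
  { pose proof (pos_INR r).
    assert (INR r * c <= INR r * (1 - s)) by (apply Rmult_le_compat_l; lra). lra. }
  replace height_bound with ((1 - eps) / c).
  - apply Rmult_lt_reg_r with c; [exact Hc|].
    unfold Rdiv. rewrite Rmult_assoc, Rinv_l by lra. lra.
  - unfold height_bound, c. field. repeat split; try lra. apply not_0_INR. lia.
Qed.

Lemma height_bound_le_linear :
  height_bound <= INR d * (/ eps - 1) / (1 + (INR d - 1) / (2 * INR d) * eps).
Proof.
  unfold height_bound. pose proof (fser_ge_linear d eps Hd He).
  assert (1 <= INR d) by (apply (le_INR 1); exact Hd).
  assert (0 <= (INR d - 1) / (2 * INR d) * eps)
    by (apply Rmult_le_pos; [apply Rdiv_le_0_compat|]; lra).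
  assert (1 < / eps) by (rewrite <- Rinv_1; apply Rinv_lt_contravar; lra).
  unfold Rdiv. apply Rmult_le_compat_l; [apply Rmult_le_pos; lra|].
  apply Rinv_le_contravar; lra.
Qed.

(* The node reached by following the child types listed in p, most recent first. *)
Fixpoint node_of_path (p : list nat) : box * nat :=
  match p with
  | nil => (unit_cube, 1%nat)
  | k :: p' => let '(P, j) := node_of_path p' in (child d eps P j k, k)
  end.

Lemma generated_path r P j : generated d eps r P j ->
  exists p, node_of_path p = (P, j) /\ length p = r /\ StronglySorted ge p /\
            (forall x, In x p -> (1 <= x <= j)%nat).
Proof.
  induction 1 as [|r P j k Hg IH Hjd Hw Hk].
  - exists nil. split; [reflexivity|]. split; [reflexivity|].
    split; [apply SSorted_nil|intros x []].
  - destruct IH as [p [Hn [Hl [Hs Hin]]]].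
    exists (k :: p). simpl. rewrite Hn. split; [reflexivity|]. split; [congruence|].
    split.
    + apply SSorted_cons; [exact Hs|]. apply Forall_forall.
      intros x Hx. specialize (Hin x Hx). unfold ge. lia.
    + pose proof (proj1 (generated_invariant r P j Hg)).
      intros x [<-|Hx]; [lia|]. specialize (Hin x Hx). lia.
Qed.

(* Q is the leaf coded by p: either the node at p itself (of type <= d, weight
   <= eps), or the type-(d+1) child of the decomposed node at p. *)
Definition leaf_code (Q : box) (p : list nat) : Prop :=
  (exists j, node_of_path p = (Q, j) /\ weight d Q <= eps) \/
  (exists P j, node_of_path p = (P, j) /\ eps < weight d P /\ Q = child d eps P j (d + 1)).

Lemma leaf_code_unique Q1 Q2 p : leaf_code Q1 p -> leaf_code Q2 p -> Q1 = Q2.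
Proof.
  intros [[j1 [H1 W1]]|[P1 [j1 [H1 [W1 E1]]]]] [[j2 [H2 W2]]|[P2 [j2 [H2 [W2 E2]]]]];
    rewrite H1 in H2; injection H2; intros; subst; reflexivity || lra.
Qed.

Definition valid_code (H : nat) (p : list nat) : Prop :=
  StronglySorted ge p /\ (forall x, In x p -> (1 <= x <= d)%nat) /\ (length p <= H)%nat.

Lemma leaf_has_code H : (forall r, decomposed_at_depth d eps r -> (S r <= H)%nat) ->
  forall Q, leaf d eps Q -> exists p, leaf_code Q p /\ valid_code H p.
Proof.
  intros HH Q [r [j [Hg Hj]]].
  destruct (generated_invariant r Q j Hg) as [Hj1 _].
  destruct (Nat.eq_dec j (d + 1)) as [->|Hne].
  - inversion Hg as [|r' P0 j0 k Hg0 Hj0 Hw0 Hk]; subst; [lia|].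
    destruct (generated_path r' P0 j0 Hg0) as [p [Hn [Hl [Hs Hin]]]].
    exists p. split; [right; exists P0, j0; auto|].
    split; [exact Hs|split].
    + intros x Hx. specialize (Hin x Hx). lia.
    + assert (S r' <= H)%nat by (apply HH; exists P0, j0; auto). lia.
  - destruct Hj as [Hj|Hj]; [contradiction|].
    destruct (generated_path r Q j Hg) as [p [Hn [Hl [Hs Hin]]]].
    exists p. split; [left; exists j; auto|].
    split; [exact Hs|split].
    + intros x Hx. specialize (Hin x Hx). lia.
    + destruct r as [|r]; [lia|].
      inversion Hg as [|r' P0 j0 k Hg0 Hj0 Hw0 Hk]; subst.
      assert (S r <= H)%nat by (apply HH; exists P0, j0; auto). lia.
Qed.

Lemma distinct_leaves_codes H : (forall r, decomposed_at_depth d eps r -> (S r <= H)%nat) ->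
  forall l : list box, ForallOrdPairs (fun P Q => ~ box_eq d P Q) l ->
  List.Forall (leaf d eps) l ->
  exists cs, length cs = length l /\ NoDup cs /\
    (forall c, In c cs -> valid_code H c /\ exists Q, In Q l /\ leaf_code Q c).
Proof.
  intros HH. induction l as [|Q l IH]; intros Hop Hl.
  - exists nil. split; [reflexivity|]. split; [constructor|intros c []].
  - inversion Hop as [|Q' l' HQ Hop']; subst. inversion Hl as [|Q' l' HlQ Hll]; subst.
    destruct (IH Hop' Hll) as [cs [Hlen [Hnd Hcs]]].
    destruct (leaf_has_code H HH Q HlQ) as [c [Hc Hvc]].
    exists (c :: cs). split; [simpl; congruence|]. split.
    + constructor; [|exact Hnd]. intros Hin.
      destruct (Hcs c Hin) as [_ [Q' [HQ' Hc']]].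
      rewrite <- (leaf_code_unique Q Q' c Hc Hc') in HQ'.
      rewrite Forall_forall in HQ. apply (HQ Q HQ'). intros i _. split; reflexivity.
    + intros c' [<-|Hc'].
      * split; [exact Hvc|]. exists Q. split; [left|]; auto.
      * destruct (Hcs c' Hc') as [Hv [Q' [HQ' Hc'']]].
        split; [exact Hv|]. exists Q'. split; [right|]; auto.
Qed.

(* Distinct leaves have distinct codes, all in codes H d with H the ceiling of
   height_bound, so there are at most C(H + d, d) of them. *)
Lemma leaves_card_le_of_rising c :
  (forall h, 0 <= h < height_bound + 1 -> rising_prod d h <= c * INR (fact d)) ->
  leaves_card_le d eps c.
Proof.
  intros Hc l Hop Hl.
  pose proof (ceilZ_nonneg height_bound (Rlt_le _ _ height_bound_pos)) as Hc0.
  set (H := Z.to_nat (ceilZ height_bound)).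
  assert (HH : forall r, decomposed_at_depth d eps r -> (S r <= H)%nat).
  { intros r Hr. apply Nat2Z.inj_le. unfold H. rewrite Z2Nat.id by exact Hc0.
    apply ceilZ_ge_S, decomposed_depth_lt, Hr. }
  destruct (distinct_leaves_codes H HH l Hop Hl) as [cs [Hlen [Hnd Hcs]]].
  assert (Hincl : incl cs (codes H d)).
  { intros p Hp. destruct (Hcs p Hp) as [[Hs [Hin Hlp]] _]. apply in_codes; assumption. }
  assert (HINR : INR H < height_bound + 1).
  { unfold H. rewrite INR_IZR_INZ, Z2Nat.id by exact Hc0. apply ceilZ_lt. }
  assert (Hfact : 0 < INR (fact d)) by apply lt_0_INR, lt_O_fact.
  apply Rmult_le_reg_r with (INR (fact d)); [exact Hfact|].
  apply Rle_trans with (rising_prod d (INR H)); [|apply Hc; split; [apply pos_INR|exact HINR]].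
  rewrite <- length_codes, <- Hlen. apply Rmult_le_compat_r; [lra|].
  apply le_INR, (NoDup_incl_length Hnd Hincl).
Qed.

End Decomposition.

Theorem mainTheorem4 (d : nat) (eps : R) :
  (1 <= d)%nat -> 0 < eps < 1 ->
  height_le d eps (ceilZ (INR d * (/ eps - 1) / fser d eps)) /\
  height_le d eps
    (ceilZ (INR d * (/ eps - 1) / (1 + (INR d - 1) / (2 * INR d) * eps))) /\
  (d = 2%nat ->
     leaves_card_le d eps
       (2 * ((/ eps - 1) / fser d eps + 3 / 2) * ((/ eps - 1) / fser d eps + 1))) /\
  ((3 <= d)%nat ->
     leaves_card_le d eps
       (INR d ^ d / INR (fact d) *
        ((/ eps - 1) / fser d eps + / 2 * (1 + 3 / INR d)) ^ d)).
Proof.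
  intros Hd He.
  assert (Hq : 0 <= (/ eps - 1) / fser d eps).
  { apply Rdiv_le_0_compat; [|pose proof (fser_ge_1 d eps Hd He); lra].
    enough (1 <= / eps) by lra. rewrite <- Rinv_1. apply Rinv_le_contravar; lra. }
  assert (Hhb : height_bound d eps = INR d * ((/ eps - 1) / fser d eps))
    by (unfold height_bound, Rdiv; ring).
  set (q := (/ eps - 1) / fser d eps) in *.
  split; [|split; [|split]].
  - apply height_le_ceilZ, decomposed_depth_lt; assumption.
  - apply height_le_ceilZ. intros r Hr.
    apply Rlt_le_trans with (height_bound d eps);
      [apply decomposed_depth_lt | apply height_bound_le_linear]; assumption.
  - intros ->. apply leaves_card_le_of_rising; [lia|exact He|].
    intros h Hh. rewrite Hhb in Hh. simpl in *. nra.
  - intros Hd3. apply leaves_card_le_of_rising; [exact Hd|exact He|].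
    intros h Hh. rewrite Hhb in Hh.
    replace (INR d ^ d / INR (fact d) * (q + / 2 * (1 + 3 / INR d)) ^ d * INR (fact d))
      with ((INR d * (q + / 2 * (1 + 3 / INR d))) ^ d).
    + apply rising_prod_le_scaled_pow; [exact Hd|lra].
    + rewrite Rpow_mult_distr. field. apply INR_fact_neq_0.
Qed.
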